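(* Let $(\mathcal S,\mathcal A,P,r)$ be a finite MDP such that $\mathcal P^\pi g^\star=g^\star$ for every policy $\pi$, and let $(g^\star,h^\star)$ be a solution of the modified Bellman equations. Let $V^0\in\mathbb R^n$, $V^k=\frac{2}{k+2}V^0+\frac{k}{k+2}TV^{k-1}$ for $k\ge1$, and let $\pi_k$ be greedy policies, $T^{\pi_k}V^k=TV^k$. Then for every $k\ge1$, \[\|g^\star-g^{\pi_k}\|_\infty\le\|TV^k-V^k-g^\star\|_\infty\le\frac{8}{k+1}\|V^0-h^\star\|_\infty.\]
   Context: An MDP $(\mathcal S,\mathcal A,P,r)$ has finite state space $\mathcal S$ ($|\mathcal S|=n$, functions identified with $\mathbb R^n$), finite action space, transition probabilities $P(s'\mid s,a)$ and bounded reward $r$. For a policy $\pi$: $r^\pi(s)=\sum_a\pi(a\mid s)r(s,a)$, $\mathcal P^\pi(s,s')=\sum_a\pi(a\mid s)P(s'\mid s,a)$, $g^\pi(s)=\liminf_{T\to\infty}\frac1T\mathbb E_\pi[\sum_{t=0}^{T-1}r(s_t,a_t)\mid s_0=s]$, $g^\star=\max_\pi g^\pi$. $T^\pi V=r^\pi+\mathcal P^\pi V$, $(TV)(s)=\max_a\{r(s,a)+\sum_{s'}P(s'\mid s,a)V(s')\}$. A pair $(g,h)$ solves the modified Bellman equations if $\max_a\sum_{s'}P(s'\mid s,a)g(s')=g(s)$ and $\max_a\{r(s,a)+\sum_{s'}P(s'\mid s,a)h(s')\}=h(s)+g(s)$ for all $s$, with some policy attaining both maxima simultaneously; the first component of any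 solution equals $g^\star$. *)

From HB Require Import structures.
From mathcomp Require Import all_boot all_order all_algebra.
From mathcomp Require Import all_classical all_reals.
From mathcomp Require Import topology normedtype sequences.
Set Implicit Arguments. Unset Strict Implicit. Unset Printing Implicit Defensive.
Import Order.TTheory GRing.Theory Num.Theory.
Local Open Scope ring_scope.

Section MDP.
Variables (R : realType) (S A : finType).
(* transition kernel P(s'|s,a) = P s a s', reward r(s,a) = r s a *)
Variables (P : S -> A -> S -> R) (r : S -> A -> R).

Definition is_kernel := forall s a, (forall s', 0 <= P s a s') /\ \sum_(s' : S) P s a s' = 1.

(* stationary (possibly randomized) policy pi(a|s) = pi s a *)
Definition is_policy (pi : S -> A -> R) :=
  forall s, (forall a, 0 <= pi s a) /\ \sum_(a : A) pi s a = 1.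

(* r^pi and P^pi, acting on functions S -> R (identified with R^n) *)
Definition rpi (pi : S -> A -> R) (s : S) : R := \sum_(a : A) pi s a * r s a.
Definition Ppi (pi : S -> A -> R) (V : S -> R) (s : S) : R :=
  \sum_(a : A) pi s a * \sum_(s' : S) P s a s' * V s'.
Definition Tpi (pi : S -> A -> R) (V : S -> R) (s : S) : R := rpi pi s + Ppi pi V s.

(* max over the (nonempty, witnessed by a0) finite action set *)
Definition maxA (a0 : A) (F : A -> R) : R := \big[Num.max/F a0]_(a : A) F a.

Definition Tbell (a0 : A) (V : S -> R) (s : S) : R :=
  maxA a0 (fun a => r s a + \sum_(s' : S) P s a s' * V s').

(* g^pi(s) = liminf_T (1/T) E_pi[sum_{t<T} r(s_t,a_t) | s_0 = s]; for a stationary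
   policy the expectation is sum_{t<T} ((P^pi)^t r^pi)(s). *)
Definition gpi (pi : S -> A -> R) (s : S) : R :=
  limn_inf (fun T : nat =>
    (T%:R)^-1 * \sum_(t < T) (iter t (Ppi pi) (rpi pi)) s).

Definition modified_bellman (a0 : A) (g h : S -> R) :=
  (forall s, maxA a0 (fun a => \sum_(s' : S) P s a s' * g s') = g s) /\
  (forall s, Tbell a0 h s = h s + g s) /\
  (exists pi, is_policy pi /\
     (forall s, Ppi pi g s = g s) /\ (forall s, Tpi pi h s = h s + g s)).

Fixpoint anchored_vi (a0 : A) (V0 : S -> R) (k : nat) : S -> R :=
  match k with
  | 0 => V0
  | k'.+1 => fun s => (2 / (k%:R + 2)) * V0 s
                      + (k%:R / (k%:R + 2)) * Tbell a0 (anchored_vi a0 V0 k') s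
  end.
End MDP.

Definition supnorm (R : realType) (S : finType) (v : S -> R) : R :=
  \big[Num.max/0]_(s : S) `|v s|.

From Pilot Require Import Defs.
From mathcomp Require Import all_boot all_order all_algebra.
From mathcomp Require Import all_classical all_reals.
From mathcomp Require Import topology normedtype sequences.
From mathcomp Require Import ring lra.
Import Order.TTheory GRing.Theory Num.Theory.
Local Open Scope classical_set_scope.
Local Open Scope ring_scope.

(** If [pi] is greedy for [V], then [r^pi = V + g* + d - P^pi V] with
    [d = TV - V - g*], so the Cesaro sums of [r^pi] telescope to
    [n g* + O(1) + sum_(t < n) (P^pi)^t d] and [g^pi] lies within [|d|] of [g*].
    For the rate, put [e_k = V^k - h* - (k/3) g*] and
    [f_k = T V^k - h* - ((k+3)/3) g*]. The recursion reads
    [(k+3) e_(k+1) = 2 e_0 + (k+1) f_k], and since [T] commutes with adding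
    multiples of [g*] and [T h* = h* + g*], nonexpansiveness of [T] gives
    [|f_k| <= |e_k|] and [|f_(k+1) - f_k| <= |e_(k+1) - e_k|]. The Halpern
    estimates [|e_k| <= |e_0|] and [(k+2)(k+3) |e_(k+1) - e_k| <= 4 (k+1) |e_0|]
    then give [|f_k - e_k| <= 8 |e_0| / (k+1)]. *)

Section limn_inf_bounds.
Context {R : realType}.
Implicit Types (u v : R^o^nat) (c x D M : R).

Lemma bounded_fun_le u x : (forall n, `|u n| <= x) -> bounded_fun u.
Proof.
move=> ux; rewrite /bounded_near; near=> y => n _ /=.
apply: le_trans (ux n) _; near: y; apply: nbhs_pinfty_ge; exact: num_real.
Unshelve. all: by end_near. Qed.

Lemma le_limn_inf u v : bounded_fun u -> bounded_fun v ->
  (\forall n \near \oo, u n <= v n) -> limn_inf u <= limn_inf v.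
Proof.
move=> bu bv [N _ uv]; apply: ler_lim.
- apply: nondecreasing_is_cvgn; last exact: bounded_fun_has_ubound_infs.
  exact/nondecreasing_infs/bounded_fun_has_lbound.
- apply: nondecreasing_is_cvgn; last exact: bounded_fun_has_ubound_infs.
  exact/nondecreasing_infs/bounded_fun_has_lbound.
near=> n; apply: lb_le_inf; first by exists (v n), n => /=.
move=> _ [m /= nm <-]; apply: le_trans (uv m _); last first.
  by apply: leq_trans nm; near: n; exact: nbhs_infty_ge.
apply: ge_inf; last by exists m.
exact/has_lbound_sdrop/bounded_fun_has_lbound.
Unshelve. all: by end_near. Qed.

Lemma limn_inf_cst x : limn_inf (fun=> x : R^o) = x.
Proof. by have [] := cvg_limn_inf_sup (cvg_cst (x : R^o)). Qed.

Lemma limn_inf_dist_le u c D M :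
  (forall n, n%:R * `|u n - c| <= M + n%:R * D) -> `|limn_inf u - c| <= D.
Proof.
move=> uc; have M0 : 0 <= M by have := uc 0%N; rewrite !mul0r addr0.
have near_c e : 0 < e -> \forall n \near \oo, `|u n - c| <= D + e.
  move=> e0; near=> n; have n0 : 0 < n%:R :> R by near: n; exact: nbhs_infty_gtr.
  have Mn : M < n%:R * e by rewrite -ltr_pdivrMr //; near: n; exact: nbhs_infty_gtr.
  have := uc n; have := normr_ge0 (u n - c); nra.
have bu : bounded_fun u.
  apply: (@bounded_fun_le _ (`|u 0%N| + `|c| + M + `|D|)) => -[|n].
    by have := normr_ge0 c; have := normr_ge0 D; lra.
  have n1 : 1 <= n.+1%:R :> R by rewrite ler1n.
  have : `|u n.+1 - c| <= M + `|D|.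
    rewrite -(ler_pM2l (lt_le_trans ltr01 n1)); have := uc n.+1.
    have := ler_norm D; have := normr_ge0 D; nra.
  have := ler_normD (u n.+1 - c) c; rewrite subrK.
  have := normr_ge0 (u 0%N); lra.
apply/ler_addgt0Pr => e e0.
have lo : c - (D + e) <= limn_inf u.
  rewrite -[X in X <= _](limn_inf_cst (c - (D + e))).
  apply: le_limn_inf => //; first exact: (@bounded_fun_le _ `|c - (D + e)|).
  by apply: filterS (near_c e e0) => n; rewrite ler_norml => /andP[+ _]; lra.
have up : limn_inf u <= c + (D + e).
  rewrite -[X in _ <= X](limn_inf_cst (c + (D + e))).
  apply: le_limn_inf => //; first exact: (@bounded_fun_le _ `|c + (D + e)|).
  by apply: filterS (near_c e e0) => n; rewrite ler_norml => /andP[_]; lra.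
by rewrite ler_norml; apply/andP; split; lra.
Unshelve. all: by end_near. Qed.
End limn_inf_bounds.

Section supnorm.
Context {R : realType} {S : finType}.
Implicit Types (x y : S -> R).

Lemma supnorm_ge0 x : 0 <= supnorm x.
Proof. exact: bigmax_ge_id. Qed.

Lemma le_supnorm x s : `|x s| <= supnorm x.
Proof. exact: le_bigmax. Qed.

Lemma supnorm_le x (c : R) : 0 <= c -> (forall s, `|x s| <= c) -> supnorm x <= c.
Proof. by move=> c0 xc; apply: bigmax_le. Qed.

Lemma supnormD x y : supnorm (fun s => x s + y s) <= supnorm x + supnorm y.
Proof.
apply: supnorm_le => [|s]; first by rewrite addr_ge0 ?supnorm_ge0.
by apply: le_trans (ler_normD _ _) _; rewrite lerD ?le_supnorm.
Qed.

Lemma supnormB x y : supnorm (fun s => x s - y s) <= supnorm x + supnorm y.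
Proof.
apply: supnorm_le => [|s]; first by rewrite addr_ge0 ?supnorm_ge0.
by apply: le_trans (ler_normB _ _) _; rewrite lerD ?le_supnorm.
Qed.

Lemma supnormZ (c : R) x : supnorm (fun s => c * x s) = `|c| * supnorm x.
Proof.
rewrite /supnorm (big_morph (fun t => `|c| * t)
  (fun a b => maxr_pMr a b (normr_ge0 c)) (mulr0 _)).
by apply: eq_bigr => s _; rewrite normrM.
Qed.

End supnorm.

Lemma norm_wavg_le {R : realType} {I : finType} (w x : I -> R) (c : R) :
  (forall i, 0 <= w i) -> \sum_i w i = 1 -> (forall i, `|x i| <= c) ->
  `|\sum_i w i * x i| <= c.
Proof.
move=> w0 w1 xc; apply: le_trans (ler_norm_sum _ _ _) _.
apply: le_trans (_ : \sum_i w i * c <= c); last by rewrite -big_distrl /= w1 mul1r.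
by apply: ler_sum => i _; rewrite normrM ger0_norm ?ler_wpM2l.
Qed.

Section maxA.
Context {R : realType} {A : finType}.
Variable a0 : A.
Implicit Types (F G : A -> R).

Lemma le_maxA F a : F a <= Defs.maxA a0 F.
Proof. exact: le_bigmax. Qed.

Lemma maxA_le F (m : R) : (forall a, F a <= m) -> Defs.maxA a0 F <= m.
Proof. by move=> Fm; apply: bigmax_le. Qed.

Lemma maxAD F (c : R) : Defs.maxA a0 (fun a => F a + c) = Defs.maxA a0 F + c.
Proof.
apply: le_anti; rewrite maxA_le => [|a]; last by rewrite lerD2r le_maxA.
by rewrite -lerBrDr maxA_le // => a; rewrite lerBrDr (le_maxA (fun a => F a + c)).
Qed.

Lemma maxA_dist_le F G (c : R) :
  (forall a, `|F a - G a| <= c) -> `|Defs.maxA a0 F - Defs.maxA a0 G| <= c.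
Proof.
move=> FGc.
have FG : Defs.maxA a0 F <= Defs.maxA a0 G + c.
  apply: maxA_le => a; have := le_maxA G a.
  by have := FGc a; rewrite ler_norml => /andP[]; lra.
have GF : Defs.maxA a0 G <= Defs.maxA a0 F + c.
  apply: maxA_le => a; have := le_maxA F a.
  by have := FGc a; rewrite ler_norml => /andP[]; lra.
by rewrite ler_norml; apply/andP; split; lra.
Qed.

End maxA.

Section policy_evaluation.
Context {R : realType} {S A : finType}.
Variables (P : S -> A -> S -> R) (pi : S -> A -> R).
Implicit Types (x y : S -> R).

Lemma Ppi_add x y : Ppi P pi (fun s => x s + y s) = fun s => Ppi P pi x s + Ppi P pi y s.
Proof.
apply: funext => s; rewrite /Ppi -big_split /=; apply: eq_bigr => a _.
by rewrite -mulrDr -big_split /=; congr (_ * _); apply: eq_bigr => s' _; rewrite mulrDr.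
Qed.

Lemma Ppi_sub x y : Ppi P pi (fun s => x s - y s) = fun s => Ppi P pi x s - Ppi P pi y s.
Proof.
apply: funext => s; rewrite /Ppi -sumrB; apply: eq_bigr => a _.
by rewrite -mulrBr -sumrB; congr (_ * _); apply: eq_bigr => s' _; rewrite mulrBr.
Qed.

Lemma iter_Ppi_add t x y : iter t (Ppi P pi) (fun s => x s + y s) =
  fun s => iter t (Ppi P pi) x s + iter t (Ppi P pi) y s.
Proof. by elim: t => //= t ->; rewrite Ppi_add. Qed.

Lemma iter_Ppi_sub t x y : iter t (Ppi P pi) (fun s => x s - y s) =
  fun s => iter t (Ppi P pi) x s - iter t (Ppi P pi) y s.
Proof. by elim: t => //= t ->; rewrite Ppi_sub. Qed.

Hypotheses (HP : is_kernel P) (Hpi : is_policy pi).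

Lemma norm_Ppi_le x s : `|Ppi P pi x s| <= supnorm x.
Proof.
have [pi0 pi1] := Hpi s; apply: norm_wavg_le => // a.
by have [P0 P1] := HP s a; apply: norm_wavg_le => // s'; exact: le_supnorm.
Qed.

Lemma norm_iter_Ppi_le t x s : `|iter t (Ppi P pi) x s| <= supnorm x.
Proof.
elim: t s => [|t IH] s; first exact: le_supnorm.
by apply: le_trans (norm_Ppi_le _ s) _; apply: supnorm_le => //; exact: supnorm_ge0.
Qed.

End policy_evaluation.

Definition dirac_policy {R : realType} {S A : finType} (a : A) : S -> A -> R :=
  fun _ a' => (a' == a)%:R.

Lemma dirac_policyP {R : realType} {S A : finType} (a : A) :
  is_policy (dirac_policy a : S -> A -> R).
Proof.
move=> s; split=> [a'|]; first by rewrite ler0n.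
by rewrite /dirac_policy (bigD1 a) //= eqxx big1 ?addr0 // => a' /negbTE ->.
Qed.

Lemma Ppi_dirac {R : realType} {S A : finType} (P : S -> A -> S -> R) a x s :
  Ppi P (dirac_policy a) x s = \sum_s' P s a s' * x s'.
Proof.
rewrite /Ppi /dirac_policy (bigD1 a) //= eqxx mul1r.
by rewrite [X in _ + X]big1 ?addr0 // => a' /negbTE ->; rewrite mul0r.
Qed.

Section bellman_operator.
Context {R : realType} {S A : finType}.
Variable a0 : A.
Variables (P : S -> A -> S -> R) (r : S -> A -> R).

Lemma Tbell_nonexpansive (HP : is_kernel P) V W s :
  `|Tbell P r a0 V s - Tbell P r a0 W s| <= supnorm (fun s => V s - W s).
Proof.
apply: maxA_dist_le => a; rewrite opprD addrACA subrr add0r -sumrB.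
under eq_bigr do rewrite -mulrBr.
by have [P0 P1] := HP s a; apply: norm_wavg_le => // s'; exact: le_supnorm.
Qed.

Lemma Tbell_add_invariant (g V : S -> R) (c : R) s :
  (forall s a, \sum_s' P s a s' * g s' = g s) ->
  Tbell P r a0 (fun s => V s + c * g s) s = Tbell P r a0 V s + c * g s.
Proof.
move=> Pg; rewrite /Tbell -maxAD; congr Defs.maxA; apply: funext => a.
rewrite -addrA -(Pg s a) big_distrr -big_split /=; congr (_ + _).
by apply: eq_bigr => s' _; rewrite mulrDr mulrCA.
Qed.

End bellman_operator.

Section average_gain.
Context {R : realType} {S A : finType}.
Variables (P : S -> A -> S -> R) (r : S -> A -> R).
Variables (pi : S -> A -> R) (g V : S -> R).
Hypothesis Pg : forall s, Ppi P pi g s = g s.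

Lemma sum_iter_Ppi_rpi n s :
  \sum_(t < n) iter t (Ppi P pi) (rpi r pi) s =
  V s - iter n (Ppi P pi) V s + n%:R * g s
  + \sum_(t < n) iter t (Ppi P pi) (fun s => Tpi P r pi V s - V s - g s) s.
Proof.
set d := fun s => Tpi P r pi V s - V s - g s.
have rpiE : rpi r pi = fun s => V s + d s + g s - Ppi P pi V s.
  by apply: funext => s'; rewrite /d /Tpi; ring.
have iter_rpi t : iter t (Ppi P pi) (rpi r pi) s =
    iter t (Ppi P pi) V s + iter t (Ppi P pi) d s + g s - iter t.+1 (Ppi P pi) V s.
  by rewrite rpiE iter_Ppi_sub !iter_Ppi_add (iter_fix _ (funext Pg)) iterSr.
elim: n => [|n IH]; first by rewrite !big_ord0 subrr mul0r !addr0.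
by rewrite !big_ord_recr /= IH iter_rpi iterS -natr1; ring.
Qed.

Lemma gpi_dist_le (a0 : A) : is_kernel P -> is_policy pi ->
  (forall s, Tpi P r pi V s = Tbell P r a0 V s) ->
  supnorm (fun s => g s - gpi P r pi s)
    <= supnorm (fun s => Tbell P r a0 V s - V s - g s).
Proof.
move=> HP Hpi greedy; set D := supnorm (fun s => Tbell P r a0 V s - V s - g s).
apply: supnorm_le => [|s]; first exact: supnorm_ge0.
rewrite distrC; apply: (@limn_inf_dist_le _ _ _ _ (2 * supnorm V)) => n /=.
rewrite -{1}normr_nat -normrM mulrBr.
have -> : n%:R * (n%:R^-1 * \sum_(t < n) iter t (Ppi P pi) (rpi r pi) s)
          = \sum_(t < n) iter t (Ppi P pi) (rpi r pi) s.
  case: n => [|n]; first by rewrite big_ord0 mul0r.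
  by rewrite mulrA divff ?mul1r // pnatr_eq0.
have dE : (fun s => Tpi P r pi V s - V s - g s) = fun s => Tbell P r a0 V s - V s - g s.
  by apply: funext => s'; rewrite greedy.
rewrite sum_iter_Ppi_rpi dE addrAC addrK.
apply: le_trans (ler_normD _ _) _; apply: lerD.
  apply: le_trans (ler_normB _ _) _; rewrite mulr2n mulrDl mul1r.
  by apply: lerD; [exact: le_supnorm | exact: norm_iter_Ppi_le].
apply: le_trans (ler_norm_sum _ _ _) _.
apply: (@le_trans _ _ (\sum_(t < n) D)).
  by apply: ler_sum => t _; exact: norm_iter_Ppi_le.
by rewrite sumr_const card_ord mulr_natl.
Qed.
End average_gain.

Section halpern_iteration.
Context {R : realType} {S : finType}.
Context {e f : nat -> S -> R}.
Hypothesis halpern_step :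
  forall k s, (k%:R + 3) * e k.+1 s = 2 * e 0%N s + (k%:R + 1) * f k s.
Hypothesis supnorm_f_le : forall k, supnorm (f k) <= supnorm (e k).
Hypothesis supnorm_Df_le : forall k,
  supnorm (fun s => f k.+1 s - f k s) <= supnorm (fun s => e k.+1 s - e k s).

Local Notation r0 := (supnorm (e 0%N)).

Lemma halpern_supnorm_le k : supnorm (e k) <= r0.
Proof.
elim: k => [//|k IH]; have k0 : 0 <= k%:R :> R by [].
rewrite -(ler_pM2l (_ : 0 < k%:R + 3)); last by lra.
rewrite -[X in X * _]ger0_norm; last by lra.
rewrite -supnormZ (funext (halpern_step k)).
apply: le_trans (supnormD _ _) _; rewrite !supnormZ !ger0_norm; try lra.
have := le_trans (supnorm_f_le k) IH; nra.
Qed.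

Lemma halpern_increment_le k :
  (k%:R + 2) * (k%:R + 3) * supnorm (fun s => e k.+1 s - e k s) <= 4 * r0 * (k%:R + 1).
Proof.
have r00 : 0 <= r0 by exact: supnorm_ge0.
elim: k => [|k IH].
  have E : (fun s => 3 * (e 1%N s - e 0%N s)) = fun s => f 0%N s - e 0%N s.
    by apply: funext => s; have := halpern_step 0 s; rewrite /=; lra.
  have := supnormB (f 0%N) (e 0%N); rewrite -E supnormZ ger0_norm //.
  by have := supnorm_f_le 0; rewrite /=; lra.
have k0 : 0 <= k%:R :> R by [].
have E : (fun s => (k%:R + 1 + 3) * (k%:R + 3) * (e k.+2 s - e k.+1 s)) =
    fun s => 2 * (f k.+1 s - e 0%N s) + (k%:R + 1) * (k%:R + 4) * (f k.+1 s - f k s).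
  apply: funext => s; have := halpern_step k s; have := halpern_step k.+1 s.
  rewrite -natr1 => stepS step; rewrite mulrBr.
  rewrite (_ : _ * e k.+2 s = (k%:R + 3) * ((k%:R + 1 + 3) * e k.+2 s)); last by ring.
  rewrite (_ : _ * e k.+1 s = (k%:R + 1 + 3) * ((k%:R + 3) * e k.+1 s)); last by ring.
  by rewrite stepS step; ring.
have := supnormD (fun s => 2 * (f k.+1 s - e 0%N s))
                 (fun s => (k%:R + 1) * (k%:R + 4) * (f k.+1 s - f k s)).
rewrite -E !supnormZ !ger0_norm; try nra.
have := supnormB (f k.+1) (e 0%N); have := supnorm_f_le k.+1.
have := halpern_supnorm_le k.+1; have := supnorm_Df_le k.
have := supnorm_ge0 (fun s => e k.+1 s - e k s).
rewrite -natr1; nra.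
Qed.

Lemma halpern_residual_le k :
  supnorm (fun s => f k s - e k s) <= 8 / (k%:R + 1) * r0.
Proof.
have k0 : 0 <= k%:R :> R by [].
have E : (fun s => (k%:R + 3) * (f k s - e k s)) =
    fun s => 2 * (f k s - e 0%N s) + (k%:R + 3) * (e k.+1 s - e k s).
  by apply: funext => s; rewrite !mulrBr halpern_step; ring.
rewrite -(ler_pM2l (_ : 0 < (k%:R + 1) * (k%:R + 2) * (k%:R + 3))); last by nra.
rewrite (_ : _ * (8 / (k%:R + 1) * r0) = 8 * (k%:R + 2) * (k%:R + 3) * r0);
  last by field; lra.
have := supnormD (fun s => 2 * (f k s - e 0%N s))
                 (fun s => (k%:R + 3) * (e k.+1 s - e k s)).
rewrite -E !supnormZ !ger0_norm; try lra.
have := supnormB (f k) (e 0%N); have := supnorm_f_le k; have := halpern_supnorm_le k.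
have := halpern_increment_le k; have := supnorm_ge0 (fun s => e k.+1 s - e k s).
have := supnorm_ge0 (e 0%N).
nra.
Qed.

End halpern_iteration.

Section anchored_value_iteration.
Context {R : realType} {S A : finType}.
Variables (a0 : A) (P : S -> A -> S -> R) (r : S -> A -> R) (g h V0 : S -> R).
Hypotheses (HP : is_kernel P) (Pg : forall s a, \sum_s' P s a s' * g s' = g s).
Hypothesis Th : forall s, Tbell P r a0 h s = h s + g s.

Local Notation V := (anchored_vi P r a0 V0).
Local Notation T := (Tbell P r a0).

Lemma anchored_viS k s : (k%:R + 3) * V k.+1 s = 2 * V0 s + (k%:R + 1) * T (V k) s.
Proof. by rewrite /= -natr1; field; have : 0 <= k%:R :> R by []; lra. Qed.

Lemma anchored_vi_residual_le k :
  supnorm (fun s => T (V k) s - V k s - g s)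
    <= 8 / (k%:R + 1) * supnorm (fun s => V0 s - h s).
Proof.
pose e j s := V j s - h s - j%:R / 3 * g s.
pose f j s := T (V j) s - h s - (j%:R + 3) / 3 * g s.
have Tshift j (W : S -> R) s : T (fun s => W s + j / 3 * g s) s = T W s + j / 3 * g s.
  exact: Tbell_add_invariant.
have step j s : (j%:R + 3) * e j.+1 s = 2 * e 0%N s + (j%:R + 1) * f j s.
  by rewrite /e /f !mulrBr anchored_viS -natr1 /=; field.
have f_le j : supnorm (f j) <= supnorm (e j).
  have -> : f j = fun s => T (V j) s - T (fun s => h s + j%:R / 3 * g s) s.
    by apply: funext => s; rewrite Tshift Th /f; field.
  have -> : e j = fun s => V j s - (h s + j%:R / 3 * g s).
    by apply: funext => s; rewrite /e; ring.
  apply: supnorm_le => [|s]; [exact: supnorm_ge0 | exact: Tbell_nonexpansive].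
have Df_le j : supnorm (fun s => f j.+1 s - f j s) <= supnorm (fun s => e j.+1 s - e j s).
  have -> : (fun s => f j.+1 s - f j s) =
      fun s => T (V j.+1) s - T (fun s => V j s + 1 / 3 * g s) s.
    by apply: funext => s; rewrite Tshift /f -natr1; field.
  have -> : (fun s => e j.+1 s - e j s) = fun s => V j.+1 s - (V j s + 1 / 3 * g s).
    by apply: funext => s; rewrite /e -natr1; field.
  apply: supnorm_le => [|s]; [exact: supnorm_ge0 | exact: Tbell_nonexpansive].
have := halpern_residual_le step f_le Df_le k.
have -> : (fun s => f k s - e k s) = fun s => T (V k) s - V k s - g s.
  by apply: funext => s; rewrite /e /f; field.
have -> // : e 0%N = fun s => V0 s - h s.
by apply: funext => s; rewrite /e !mul0r subr0.
Qed.

End anchored_value_iteration.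

Theorem corollary2 (R : realType) (S A : finType) (a0 : A)
    (P : S -> A -> S -> R) (r : S -> A -> R)
    (gstar hstar : S -> R) (V0 : S -> R) (pik : nat -> S -> A -> R) :
  is_kernel P ->
  modified_bellman P r a0 gstar hstar ->
  (forall pi, is_policy pi -> forall s, Ppi P pi gstar s = gstar s) ->
  (forall k, (1 <= k)%N -> is_policy (pik k) /\
     forall s, Tpi P r (pik k) (anchored_vi P r a0 V0 k) s
               = Tbell P r a0 (anchored_vi P r a0 V0 k) s) ->
  forall k, (1 <= k)%N ->
    supnorm (fun s => gstar s - gpi P r (pik k) s)
      <= supnorm (fun s => Tbell P r a0 (anchored_vi P r a0 V0 k) s
                           - anchored_vi P r a0 V0 k s - gstar s) /\
    supnorm (fun s => Tbell P r a0 (anchored_vi P r a0 V0 k) s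
                      - anchored_vi P r a0 V0 k s - gstar s)
      <= 8 / (k%:R + 1) * supnorm (fun s => V0 s - hstar s).
Proof.
move=> HP [_ [Th _]] Pg greedy k k1; have [pol_k greedy_k] := greedy k k1.
split; first by apply: gpi_dist_le => //; exact: Pg.
apply: anchored_vi_residual_le => // s a.
by rewrite -(Ppi_dirac P a); exact: Pg (dirac_policyP a) s.
Qed.
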